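(* There is an absolute constant $\epsilon_0\in(0,\frac14]$ such that for all sufficiently large even $d$ and every $i\in[\frac d2]$, the function $f_i:\{0,1\}^d\to\{0,1\}$ defined by $f_i(x)=1$ if $|x|>\frac d2+\sqrt d$, $f_i(x)=0$ if $|x|<\frac d2-\sqrt d$, and $f_i(x)=x_i\oplus x_{i+d/2}$ otherwise, is $\epsilon_0$-far from unate.
   Context: $|x|$ is the number of coordinates of $x\in\{0,1\}^d$ equal to $1$; $\oplus$ is XOR. A function $f:\{0,1\}^d\to\mathbb{R}$ is unate if each dimension $i\in[d]$ can be assigned a direction up or down such that: if up, $f(x)\le f(x+e_i)$ for all $x$ with $x_i=0$ (here $x+e_i$ is $x$ with the $i$-th bit set to 1); if down, $f(x)\ge f(x+e_i)$ for all such $x$. The distance between two functions is the fraction of points where they differ; $f$ is $\epsilon$-far from unate if its distance to every unate function is at least $\epsilon$. *)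

From HB Require Import structures.
From mathcomp Require Import all_boot all_order all_algebra.
Set Implicit Arguments. Unset Strict Implicit. Unset Printing Implicit Defensive.
Import Order.TTheory GRing.Theory Num.Theory.

Definition cube (d : nat) := {ffun 'I_d -> bool}.

Definition weight d (x : cube d) : nat := #|[set j | x j]|.

Definition setbit d (x : cube d) (j : 'I_d) : cube d :=
  [ffun k => if k == j then true else x k].

(* Coordinate n of x (as a nat index); false if n >= d. *)
Definition bit d (x : cube d) (n : nat) : bool :=
  [exists j : 'I_d, (nat_of_ord j == n) && x j].

Definition unate (R : realFieldType) d (g : cube d -> R) : Prop :=
  exists dir : 'I_d -> bool, forall (x : cube d) (j : 'I_d), x j = false ->
    if dir j then (g x <= g (setbit x j))%R else (g (setbit x j) <= g x)%R.

Definition dist (R : realFieldType) d (f g : cube d -> R) : rat :=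
  (#|[set x : cube d | f x != g x]|%:R / (2 ^ d)%:R)%R.

(* The function f_i (0-indexed i < d/2, uses coordinates i and i + d/2).
   |x| > d/2 + sqrt d  <->  d/2 < |x| /\ d < (|x| - d/2)^2
   |x| < d/2 - sqrt d  <->  |x| < d/2 /\ d < (d/2 - |x|)^2        *)
Definition f_i d (i : nat) (x : cube d) : bool :=
  let w := weight x in
  if (d./2 < w) && (d < (w - d./2) ^ 2) then true
  else if (w < d./2) && (d < (d./2 - w) ^ 2) then false
  else bit x i (+) bit x (i + d./2).

From HB Require Import structures.
From mathcomp Require Import all_boot all_order all_algebra.
From mathcomp Require Import zify lra.
Import Order.TTheory GRing.Theory Num.Theory.
Set Implicit Arguments. Unset Strict Implicit. Unset Printing Implicit Defensive.

(* Near the middle layer, ||x| - d/2| <= sqrt d, f_i is the XOR of the bits i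
   and i + d/2.  A unate g cannot agree with the XOR on a whole 2x2 square in
   these two coordinates: it would have to increase and decrease along bit i.
   Hence every square around a point of weight within sqrt d - 2 of d/2
   contains a mismatch, and the mismatches number at least a quarter of these
   points.  Since |x| has variance d/4, Chebyshev's inequality leaves fewer
   than half of the cube outside this range, so f_i and g differ on at least
   1/8 of the cube. *)

Definition upd d (x : cube d) (j : 'I_d) (b : bool) : cube d :=
  [ffun k => if k == j then b else x k].

Section Update.
Variable d : nat.
Implicit Types (x : cube d) (j k : 'I_d) (b c : bool).

Lemma upd_same x j b : upd x j b j = b.
Proof. by rewrite ffunE eqxx. Qed.

Lemma upd_other x j k b : k != j -> upd x j b k = x k.
Proof. by rewrite ffunE => /negbTE ->. Qed.

Lemma upd_id x j : upd x j (x j) = x.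
Proof. by apply/ffunP=> k; rewrite ffunE; case: eqP => [->|]. Qed.

Lemma upd_upd x j b c : upd (upd x j b) j c = upd x j c.
Proof. by apply/ffunP=> k; rewrite !ffunE; case: eqP. Qed.

Lemma updC x j k b c : j != k -> upd (upd x j b) k c = upd (upd x k c) j b.
Proof.
move=> jk; apply/ffunP=> l; rewrite !ffunE.
by case: eqP => [->|//]; rewrite eq_sym (negbTE jk).
Qed.

Lemma setbitE x j : setbit x j = upd x j true.
Proof. by []. Qed.

Lemma weightE x : weight x = \sum_j (x j : nat).
Proof.
by rewrite /weight -sum1dep_card big_mkcond; apply: eq_bigr => j _; case: (x j).
Qed.

Lemma dist_weight_upd x j b : `|weight (upd x j b) - weight x| <= 1.
Proof.
rewrite !weightE (bigD1 j) //= [in X in `|_ - X|](bigD1 j) //= upd_same.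
rewrite (eq_bigr (fun k => x k : nat)) => [|k kj]; last by rewrite upd_other.
by case: b; case: (x j); lia.
Qed.

End Update.

Lemma card_cube d : #|{: cube d}| = 2 ^ d.
Proof. by rewrite card_ffun card_bool card_ord. Qed.

Lemma bitE d (x : cube d) n (n_lt : n < d) : bit x n = x (Ordinal n_lt).
Proof.
apply/existsP/idP => [[k /andP[/eqP kn xk]]|xn]; last by exists (Ordinal n_lt); rewrite eqxx.
by have -> : Ordinal n_lt = k by apply: val_inj.
Qed.

Lemma card_le_square_cover d (A B : {set cube d}) (j k : 'I_d) : j != k ->
  (forall x, x \in A -> exists a c, upd (upd x k c) j a \in B) ->
  #|A| <= 4 * #|B|.
Proof.
move=> jk cover.
pose square (p : cube d * (bool * bool)) := upd (upd p.1 k p.2.2) j p.2.1.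
have sub : A \subset square @: setX B setT.
  apply/subsetP => x /cover [a [c yB]]; apply/imsetP.
  exists (upd (upd x k c) j a, (x j, x k)); first by rewrite !inE yB.
  by rewrite /square /= (updC _ _ _ jk) !upd_upd !upd_id.
apply: leq_trans (subset_leq_card sub) (leq_trans (leq_imset_card _ _) _).
by rewrite cardsX cardsT card_prod card_bool mulnC.
Qed.

Lemma unate_neq_xor_square (R : realFieldType) d (g : cube d -> R) x j k :
  unate g -> ~ (forall a c, g (upd (upd x k c) j a) = ((a (+) c : nat)%:R)%R).
Proof.
move=> [dir mono] xor.
have := mono (upd (upd x k true) j false) j (upd_same _ _ _).
have := mono (upd (upd x k false) j false) j (upd_same _ _ _).
by rewrite !setbitE !upd_upd !xor; case: (dir j) => /=; lra.
Qed.

Lemma f_i_band d i (x : cube d) : `|weight x - d./2| ^ 2 <= d ->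
  f_i i x = bit x i (+) bit x (i + d./2).
Proof.
move=> band; rewrite /f_i.
have far_ge n : n <= `|weight x - d./2| -> d < n ^ 2 = false.
  by move=> n_le; apply/negbTE; rewrite -leqNgt (leq_trans _ band) // leq_sqr.
by rewrite !far_ge ?andbF //; lia.
Qed.

Definition spin (b : bool) : int := if b then 1%R else (-1)%R.

Lemma sum_spin_mul d (j k : 'I_d) : j != k ->
  (\sum_(x : cube d) spin (x j) * spin (x k) = 0)%R.
Proof.
move=> jk; set S := (\sum_x _)%R.
have flipK : involutive (fun x : cube d => upd x j (~~ x j)).
  by move=> x; rewrite upd_upd upd_same negbK upd_id.
have : S = (- S)%R.
  rewrite {1}/S (reindex_inj (inv_inj flipK)) /= -sumrN.
  apply: eq_bigr => x _; rewrite upd_same upd_other 1?eq_sym // -mulNr.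
  by case: (x j).
by move/eqP; rewrite -addr_eq0 -mulr2n mulrn_eq0 => /eqP.
Qed.

Lemma sum_spin_sqr d :
  (\sum_(x : cube d) (\sum_j spin (x j)) ^+ 2 = (d * 2 ^ d)%:R)%R.
Proof.
under eq_bigr => x _ do rewrite expr2 big_distrlr /=.
rewrite exchange_big /= (eq_bigr (fun _ => (2 ^ d)%:R))%R.
  by rewrite sumr_const card_ord natrM mulr_natl.
move=> j _; rewrite exchange_big /= (bigD1 j) //= [X in (_ + X)%R]big1 => [|k kj]; last first.
  by rewrite sum_spin_mul // eq_sym.
rewrite addr0 (eq_bigr (fun _ => 1%R)) => [|x _]; last by case: (x j).
by rewrite sumr_const card_cube.
Qed.

Lemma sum_spinE d (x : cube d) :
  (\sum_j spin (x j) = (weight x).*2%:R - d%:R)%R.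
Proof.
rewrite weightE -mul2n natrM natr_sum mulr_sumr.
have -> : (d%:R = \sum_(j < d) 1 :> int)%R by rewrite sumr_const card_ord.
by rewrite -sumrB; apply: eq_bigr => j _; case: (x j).
Qed.

Lemma sum_dist_weight_sqr d :
  \sum_(x : cube d) `|(weight x).*2 - d| ^ 2 = d * 2 ^ d.
Proof.
apply/eqP; rewrite -(eqr_nat int) natr_sum -sum_spin_sqr; apply/eqP.
by apply: eq_bigr => x _; rewrite sum_spinE natrX natr_absz intz real_normK ?num_real // !natz.
Qed.

Lemma sum_dist_weight_half_sqr d : ~~ odd d ->
  4 * \sum_(x : cube d) `|weight x - d./2| ^ 2 = d * 2 ^ d.
Proof.
move=> d_even; rewrite -sum_dist_weight_sqr big_distrr /=; apply: eq_bigr => x _.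
have d_half : d = d./2.*2 by rewrite -[LHS]odd_double_half (negbTE d_even).
have -> : `|(weight x).*2 - d| = (`|weight x - d./2|).*2 by lia.
by rewrite -mul2n expnMn.
Qed.

Lemma card_ge_mul_le_sum (T : finType) (F : T -> nat) t :
  #|[set x | t <= F x]| * t <= \sum_x F x.
Proof.
rewrite -sum_nat_const [X in _ <= X](bigID (mem [set x | t <= F x])) /=.
by apply: leq_trans (leq_addr _ _); apply: leq_sum => x; rewrite inE.
Qed.

Lemma exists_isqrt n : exists s, s ^ 2 <= n < s.+1 ^ 2.
Proof.
elim: n => [|n [s /andP[sn ns]]]; first by exists 0.
case: (leqP (s.+1 ^ 2) n.+1) => sn1; last by exists s; rewrite sn1 andbT leqW.
by exists s.+1; rewrite sn1 /=; move: ns sn1; rewrite !expnS !expn0 !muln1; nia.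
Qed.

Lemma half_lt_sqr_pred d s : 36 <= d -> d < s.+1 ^ 2 -> d./2 < s.-1 ^ 2.
Proof.
move=> d_ge d_lt; have s_ge : 6 <= s.
  by rewrite -ltnS -(@ltn_sqr 6); apply: leq_ltn_trans d_ge d_lt.
move: d_lt; rewrite -divn2 !expnS !expn0 !muln1; nia.
Qed.

Section MismatchCount.
Variables (d i s : nat) (R : realFieldType) (g : cube d -> R).
Hypotheses (d_ge : 36 <= d) (d_even : ~~ odd d) (s_sqrt : s ^ 2 <= d < s.+1 ^ 2).

Let h := d./2.
Let far := [set x : cube d | s.-1 <= `|weight x - h|].
Let d_half : d = h.*2.
Proof. by rewrite -[LHS]odd_double_half (negbTE d_even). Qed.

Lemma card_far_lt : (#|far|).*2 < 2 ^ d.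
Proof.
have var := sum_dist_weight_half_sqr d_even.
have markov : #|far| * s.-1 ^ 2 <= \sum_(x : cube d) `|weight x - h| ^ 2.
  have -> : far = [set x | s.-1 ^ 2 <= `|weight x - h| ^ 2].
    by apply/setP => x; rewrite !inE leq_sqr.
  exact: card_ge_mul_le_sum.
have h_lt : h < s.-1 ^ 2 := half_lt_sqr_pred d_ge (proj2 (andP s_sqrt)).
rewrite -(ltn_pmul2r (leq_ltn_trans (leq0n h) h_lt)).
apply: leq_ltn_trans (_ : _ <= h * 2 ^ d) _; last by rewrite mulnC ltn_pmul2l ?expn_gt0.
move: markov var d_half; move: (\sum_x _) #|far| (2 ^ d) (s.-1 ^ 2) => S F P T.
nia.
Qed.

Hypotheses (i_lt : i < h) (g_unate : unate g).
Let mismatch := [set x | ((f_i i x : nat)%:R : R) != g x]%R.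

Lemma card_near_le : #|~: far| <= 4 * #|mismatch|.
Proof.
have lt_i : i < d by lia.
have lt_ih : i + h < d by lia.
pose I := Ordinal lt_i; pose J := Ordinal lt_ih.
have IJ : I != J by rewrite -val_eqE /=; lia.
apply: (card_le_square_cover IJ) => x; rewrite !inE -ltnNge => near.
have f_square a c : f_i i (upd (upd x J c) I a) = a (+) c.
  rewrite f_i_band ?(bitE _ lt_i) ?(bitE _ lt_ih) -/I -/J.
    by rewrite /= upd_same upd_other ?upd_same // eq_sym.
  rewrite -/h (leq_trans _ (proj1 (andP s_sqrt))) // leq_sqr.
  have := dist_weight_upd (upd x J c) I a; have := dist_weight_upd x J c; lia.
case: (pickP (fun p : bool * bool => upd (upd x J p.2) I p.1 \in mismatch)) => [[a c] bad|good].
  by exists a, c.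
exfalso; apply: (unate_neq_xor_square (x := x) (j := I) (k := J) g_unate) => a c.
by have := good (a, c); rewrite /= inE f_square => /negbFE/eqP <-.
Qed.

Lemma card_mismatch_ge : 2 ^ d <= 8 * #|mismatch|.
Proof.
have := cardsC far; rewrite card_cube; have := card_far_lt; have := card_near_le.
lia.
Qed.

End MismatchCount.

Theorem claim12 :
  exists eps0 : rat, (0 < eps0)%R /\ (eps0 <= 1 / 4)%R /\
  exists D : nat, forall d : nat, D <= d -> ~~ odd d ->
    forall i : nat, i < d./2 ->
    forall (R : realFieldType) (g : cube d -> R), unate g ->
      (eps0 <= dist (fun x => ((f_i i x : nat)%:R : R)) g)%R.
Proof.
exists (1 / 8)%R; split; first by lra.
split; first by lra.
exists 36 => d d_ge d_even i i_lt R g g_unate.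
have [s s_sqrt] := exists_isqrt d.
have := card_mismatch_ge d_ge d_even s_sqrt i_lt g_unate.
rewrite -(ler_nat rat) natrM /dist ler_pdivlMr; last by rewrite ltr0n expn_gt0.
lra.
Qed.
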